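(* Assume the Bateman–Horn Conjecture. Then $\limsup_{n\to\infty} j(a_n)=\infty$; that is, for every positive integer $k$ there are infinitely many $n$ with $j(a_n)\ge k$.
   Context: Let $A$ be the set of positive integers $a$ such that $a^2+1$ is prime, enumerated in increasing order as $A=\{a_1<a_2<\cdots\}$. For $n\ge 2$, $j(a_n)$ denotes the smallest index $i$ with $1\le i\le n-1$ such that $a_n-a_{n-i}\in A$. A finite set of polynomials $f_1,\dots,f_k\in\mathbb{Z}[x]$ satisfies the Bunyakovsky condition if there is no prime $p$ such that $\prod_i f_i(a)\equiv 0 \pmod p$ for all $a\in\mathbb{F}_p$. The Bateman–Horn Conjecture: if $f_1,\dots,f_k\in\mathbb{Z}[x]$ are distinct irreducible polynomials with positive leading coefficients satisfying the Bunyakovsky condition, then the number of positive integers $m\le x$ for which $f_1(m),\dots,f_k(m)$ are all prime is asymptotic to $C\,\frac{x}{\log^k x}$ for some constant $C>0$ (depending on $f_1,\dots,f_k$). *)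

From HB Require Import structures.
From mathcomp Require Import all_boot all_order all_algebra.
From mathcomp Require Import all_classical all_reals.
From mathcomp Require Import exp Rstruct.
Local Notation R := Rdefinitions.R.
Set Implicit Arguments. Unset Strict Implicit. Unset Printing Implicit Defensive.
Import Order.TTheory GRing.Theory Num.Theory.
Local Open Scope ring_scope.

Definition primez (z : int) : bool := (0 < z) && prime (absz z).

Definition irreducible_Zx (f : {poly int}) : Prop :=
  f != 0 /\ ~~ (f \is a GRing.unit) /\
  forall g h : {poly int}, f = g * h -> (g \is a GRing.unit) \/ (h \is a GRing.unit).

Definition bunyakovsky (fs : seq {poly int}) : Prop :=
  ~ exists p : nat, prime p /\
      forall a : nat, (a < p)%N ->
        (p%:Z %| \prod_(f <- fs) f.[a%:Z])%Z.

Definition bh_count (fs : seq {poly int}) (x : R) : nat :=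
  count (fun m : nat => all (fun f : {poly int} => primez f.[m%:Z]) fs)
        (iota 1 (Num.truncn x)).

(* The Bateman–Horn Conjecture. "count ~ C x / log^k x" is spelled out as:
   the ratio tends to 1 as the real x tends to +infinity. *)
Definition BatemanHorn : Prop :=
  forall fs : seq {poly int},
    uniq fs ->
    (forall f, f \in fs -> irreducible_Zx f) ->
    (forall f, f \in fs -> 0 < lead_coef f) ->
    bunyakovsky fs ->
    exists C : R, 0 < C /\
      forall eps : R, 0 < eps -> exists X : R, forall x : R, X <= x ->
        `| (bh_count fs x)%:R / (C * x / (ln x) ^+ (size fs)) - 1 | < eps.

Definition inA (a : nat) : bool := (0 < a)%N && prime (a ^ 2 + 1).

(* nthA n a : a is a_n, the n-th element (1-indexed) of A in increasing
   order, i.e. a \in A and exactly n-1 elements of A are smaller than a. *)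
Definition nthA (n a : nat) : Prop :=
  (0 < n)%N /\ inA a /\ count inA (iota 0 a) = n.-1.

(* jA n j : a_n exists, n >= 2, and j(a_n) = j, i.e. j is the smallest
   index i with 1 <= i <= n-1 such that a_n - a_(n-i) \in A. *)
Definition jA (n j : nat) : Prop :=
  (2 <= n)%N /\
  exists an : nat, nthA n an /\
    (1 <= j <= n.-1)%N /\
    (exists b, nthA (n - j) b /\ inA (an - b)) /\
    (forall i, (1 <= i < j)%N -> forall b, nthA (n - i) b -> ~~ inA (an - b)).

(* Fix [k], put [Q = (2k+2)!] and take the shifts [t_y = 2 (Q y)^2] for [y < k]
   together with one more shift [Q m0] such that [Q m0] lies in [A].  For these
   shifts [t] the polynomials [(Q x - t)^2 + 1] satisfy the hypotheses of
   Bateman-Horn ([Q] removes every prime small enough to be a fixed divisor), so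
   about [x / log^(k+1) x] integers [m <= x] make all of them prime.  For any
   other [t < t_(k-1)], the [m] that also make [(Q x - t)^2 + 1] prime number
   [O(x / log^(k+2) x)], or boundedly many if Bunyakovsky fails.  Hence some
   large [m] makes every [Q m - t_y] an element of [A] and leaves no other
   element of [A] in [(Q m - t_(k-1), Q m]].  Then [a = Q m = a_n] has
   [a_(n-y) = a - t_y] for [y < k], and [a - a_(n-y) = 2 (Q y)^2] is not in [A]
   since [4 z^4 + 1 = (2 z^2 - 2 z + 1) (2 z^2 + 2 z + 1)]; so [j(a_n) >= k].
   Finally [j(a_n)] is defined because [a - (a - Q m0) = Q m0] is in [A]. *)

From mathcomp Require Import all_boot all_order all_algebra.
From mathcomp Require Import all_classical all_reals.
From mathcomp Require Import sequences exp Rstruct.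
From mathcomp Require Import ring lra zify.
Set Implicit Arguments. Unset Strict Implicit. Unset Printing Implicit Defensive.
Import Order.TTheory GRing.Theory Num.Theory.
Local Open Scope ring_scope.
Local Notation R := Rdefinitions.R.

(** * Fixed prime divisors *)

Definition fixed_prime_divisor (P : {poly int}) : Prop :=
  exists p : nat, prime p /\ forall a : nat, (a < p)%N -> (p%:Z %| P.[a%:Z])%Z.

Lemma bunyakovskyE (fs : seq {poly int}) :
  bunyakovsky fs <-> ~ fixed_prime_divisor (\prod_(f <- fs) f).
Proof.
split=> hB [p [pp hp]]; apply: hB; exists p; split=> // a /hp;
  by rewrite horner_prod.
Qed.

Lemma fixed_prime_divisorMr (g h : {poly int}) :
  fixed_prime_divisor g -> fixed_prime_divisor (g * h).
Proof.
by case=> p [pp hp]; exists p; split=> // a /hp pg; rewrite hornerM dvdz_mulr.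
Qed.

Lemma fixed_prime_divisorC (c : int) :
  c != 0 -> ~~ (c%:P \is a GRing.unit) -> fixed_prime_divisor c%:P.
Proof.
move=> c0 cU; have c1 : (1 < `|c|)%N.
  by move: cU; rewrite poly_unitE size_polyC coefC /= c0 /=; lia.
exists (pdiv `|c|); split=> [|a _]; first exact: pdiv_prime.
by rewrite hornerC dvdzE /= pdiv_dvd.
Qed.

Lemma fixed_prime_divisor_prod (fs : seq {poly int}) f : f \in fs ->
  fixed_prime_divisor f -> fixed_prime_divisor (\prod_(g <- fs) g).
Proof. by move=> ffs FD; rewrite (big_rem f) //; apply: fixed_prime_divisorMr. Qed.

Section FixedDivisorModP.

Variable p : nat.
Hypothesis p_pr : prime p.

Local Notation modp P := (map_poly (intr : int -> 'F_p) P).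

Lemma dvdz_horner (P : {poly int}) (z : int) :
  (p%:Z %| P.[z])%Z = root (modp P) z%:~R.
Proof. by rewrite /root horner_map (dvdz_pcharf (pchar_Fp p_pr)). Qed.

Lemma prime_dvdz_prod (fs : seq {poly int}) (m : int) :
  (p%:Z %| (\prod_(f <- fs) f).[m])%Z -> exists2 f, f \in fs & (p%:Z %| f.[m])%Z.
Proof.
rewrite dvdz_horner /root rmorph_prod horner_prod prodf_seq_eq0.
by case/hasP=> f ffs /= f0; exists f; rewrite // dvdz_horner.
Qed.

Lemma fixed_divisor_everywhere (P : {poly int}) :
  (forall a : nat, (a < p)%N -> (p%:Z %| P.[a%:Z])%Z) ->
  forall m : nat, (p%:Z %| P.[m%:Z])%Z.
Proof.
move=> hP m; have := hP _ (ltn_pmod m (prime_gt0 p_pr)).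
by rewrite !dvdz_horner /= -!pmulrn Fp_nat_mod.
Qed.

Lemma fixed_divisor_lt_size (P : {poly int}) : modp P != 0 ->
  (forall a : nat, (a < p)%N -> (p%:Z %| P.[a%:Z])%Z) -> (p < size P)%N.
Proof.
move=> nzP hP; pose rs := [seq (a%:R : 'F_p) | a <- iota 0 p].
have rsP : all (root (modp P)) rs.
  apply/allP=> x /mapP[a]; rewrite mem_iota => /andP[_ ap] ->.
  by have := hP a ap; rewrite dvdz_horner /= -pmulrn.
have uniq_rs : uniq rs.
  rewrite map_inj_in_uniq ?iota_uniq // => a b.
  rewrite !mem_iota /= => ap bp /(congr1 val).
  by rewrite /= !val_Fp_nat // !modn_small.
have := max_poly_roots nzP rsP uniq_rs; rewrite size_map size_iota => /leq_trans.
by apply; rewrite map_polyE (leq_trans (size_Poly _)) // size_map.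
Qed.

End FixedDivisorModP.

(** * The quadratics [(u x - v)^2 + 1] *)

Definition quad (u v : int) : {poly int} := (u *: 'X - v%:P) ^+ 2 + 1.

Lemma quad_Poly u v : quad u v = Poly [:: v ^+ 2 + 1; - (2 * u * v); u ^+ 2].
Proof.
by rewrite /quad /= !cons_poly_def -mul_polyC; ring.
Qed.

Lemma horner_quad u v x : (quad u v).[x] = (u * x - v) ^+ 2 + 1.
Proof. by rewrite /quad !hornerE. Qed.

Lemma coef_quad u v i : (quad u v)`_i = [:: v ^+ 2 + 1; - (2 * u * v); u ^+ 2]`_i.
Proof. by rewrite quad_Poly coef_Poly. Qed.

Lemma size_quad u v : u != 0 -> size (quad u v) = 3%N.
Proof. by move=> u0; rewrite quad_Poly (PolyK (c := 0)) //= sqrf_eq0. Qed.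

Lemma quad_neq0 u v : u != 0 -> quad u v != 0.
Proof. by move=> u0; rewrite -size_poly_eq0 size_quad. Qed.

Lemma lead_coef_quad u v : u != 0 -> lead_coef (quad u v) = u ^+ 2.
Proof. by move=> u0; rewrite /lead_coef size_quad // coef_quad. Qed.

Lemma quad_inj (u : int) (v w : nat) : quad u v = quad u w -> v = w.
Proof.
move=> /(congr1 (horner^~ 0)); rewrite !horner_quad mulr0 !sub0r !sqrrN.
by move/addIr/eqP; rewrite eqrXn2 // => /eqP[].
Qed.

Lemma discriminant_mul_linear (S : comNzRingType) (g h : {poly S}) :
  (size g <= 2)%N -> (size h <= 2)%N ->
  (g * h)`_1 ^+ 2 - 4 * (g * h)`_2 * (g * h)`_0 = (g`_0 * h`_1 - g`_1 * h`_0) ^+ 2.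
Proof.
move=> sg sh; have g2 : g`_2 = 0 by rewrite nth_default.
have h2 : h`_2 = 0 by rewrite nth_default.
rewrite !coefM !big_ord_recr !big_ord0 /= !subnn !subn0 (_ : (2 - 1 = 1)%N) // g2 h2; ring.
Qed.

Lemma unit_of_const_factor (P g h : {poly int}) : ~ fixed_prime_divisor P ->
  P = g * h -> size g = 1%N -> g \is a GRing.unit.
Proof.
move=> noFD E sg1; have gC := size1_polyC (eq_leq sg1).
have g0 : g`_0 != 0.
  by rewrite -[0%N]/(1.-1)%N -sg1 -lead_coefE lead_coef_eq0 -size_poly_eq0 sg1.
have [//|gU] := boolP (g \is a GRing.unit); exfalso; apply: noFD.
by rewrite E gC; apply/fixed_prime_divisorMr/fixed_prime_divisorC; rewrite -?gC.
Qed.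

Lemma quad_irreducible u v : u != 0 ->
  ~ fixed_prime_divisor (quad u v) -> irreducible_Zx (quad u v).
Proof.
move=> u0 noFD; have s3 := size_quad v u0.
split; first exact: quad_neq0.
split=> [|g h E]; first by rewrite poly_unitE s3.
have g0 : g != 0 by apply/eqP=> g0; move: (quad_neq0 v u0); rewrite E g0 mul0r eqxx.
have h0 : h != 0 by apply/eqP=> h0; move: (quad_neq0 v u0); rewrite E h0 mulr0 eqxx.
have [/(unit_of_const_factor noFD E)|/eqP sg1] := eqVneq (size g) 1%N; first by left.
have [sh1|/eqP sh1] := eqVneq (size h) 1%N.
  by right; apply: (unit_of_const_factor noFD _ sh1); rewrite E mulrC.
have := size_mul g0 h0; rewrite -E s3.
have := size_poly_gt0 g; have := size_poly_gt0 h; rewrite g0 h0 => hpos gpos sz.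
have {}sz : (size g + size h = 4)%N by rewrite -[LHS]prednK ?sz // addn_gt0 gpos.
have sg2 : (size g <= 2)%N by lia.
have sh2 : (size h <= 2)%N by lia.
(* two linear factors would make the discriminant, here [-4 u^2], a square *)
have := discriminant_mul_linear sg2 sh2; rewrite -E !coef_quad /= => disc.
have u2 : 0 < 4 * u ^+ 2 by rewrite mulr_gt0 // lt0r sqr_ge0 sqrf_eq0 u0.
have := sqr_ge0 (g`_0 * h`_1 - g`_1 * h`_0); rewrite -disc.
have -> : (- (2 * u * v)) ^+ 2 - 4 * u ^+ 2 * (v ^+ 2 + 1) = - (4 * u ^+ 2) by ring.
by rewrite oppr_ge0 leNgt u2.
Qed.

Lemma map_quad (S : comNzRingType) (f : {rmorphism int -> S}) u v (z : S) :
  (map_poly f (quad u v)).[z] = (f u * z - f v) ^+ 2 + 1.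
Proof.
by rewrite /quad rmorphD rmorphXn rmorphB rmorph1 /= map_polyZ map_polyX map_polyC !hornerE.
Qed.

Definition quads (Q : nat) (ts : seq nat) : seq {poly int} := [seq quad Q t%:Z | t <- ts].

Lemma size_prod_quads Q ts : (0 < Q)%N ->
  size (\prod_(f <- quads Q ts) f) = (2 * size ts).+1.
Proof.
move=> Q0; have Q0' : Q%:Z != 0 by rewrite eqz_nat -lt0n.
elim: ts => [|t ts IH]; first by rewrite big_nil size_poly1.
rewrite big_cons size_mul ?quad_neq0 // -?size_poly_eq0 IH //.
by rewrite size_quad //= mulnS.
Qed.

Lemma bunyakovsky_quads Q ts : (0 < Q)%N -> all (dvdn Q) ts ->
  (forall p, prime p -> (p <= 2 * size ts)%N -> (p %| Q)%N) ->
  bunyakovsky (quads Q ts).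
Proof.
(* If [p %| Q], every factor is [1] modulo [p].  Otherwise [p > 2 * size ts],
   the degree of the product, which stays nonzero modulo [p]; so it cannot
   vanish on all of [F_p]. *)
move=> Q0 Qts hQ; apply/bunyakovskyE => -[p [pp hp]].
have Fquad (t : nat) (z : 'F_p) :
    (map_poly intr (quad Q t)).[z] = (Q%:R * z - t%:R) ^+ 2 + 1.
  by rewrite map_quad /= !pmulrn.
have Fp0 n : (p %| n)%N -> n%:R = 0 :> 'F_p by rewrite (dvdn_pcharf (pchar_Fp pp)) => /eqP.
have [pQ|pQ] := boolP (p %| Q)%N.
  have := hp 0%N (prime_gt0 pp); rewrite dvdz_horner // /root rmorph_prod.
  rewrite horner_prod big_map big1_seq ?oner_eq0 // => t /andP[_ tts].
  have pt : (p %| t)%N by apply: dvdn_trans pQ (allP Qts t tts).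
  by rewrite Fquad Fp0 // Fp0 // mul0r subrr expr0n add0r.
have Fprod_neq0 : map_poly intr (\prod_(f <- quads Q ts) f) != 0 :> {poly 'F_p}.
  rewrite rmorph_prod prodf_seq_neq0 all_map; apply/allP => t tts /=.
  apply/eqP => /(congr1 (horner^~ (t %/ Q)%:R)).
  rewrite Fquad horner0 -natrM mulnC divnK ?(allP Qts t tts) // subrr expr0n add0r.
  by move/eqP; rewrite oner_eq0.
have := fixed_divisor_lt_size pp Fprod_neq0 hp.
by rewrite size_prod_quads // ltnS => /(hQ p pp); rewrite (negPf pQ).
Qed.

(** * Counting prime values under Bateman-Horn *)

Lemma ratio_near1 (F : realFieldType) (c D : F) :
  0 < D -> `|c / D - 1| < 2^-1 -> 2^-1 * D < c < 3 / 2 * D.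
Proof.
move=> D0; rewrite ltr_norml => /andP[lo hi].
have -> : c = c / D * D by rewrite divfK ?gt_eqF.
by rewrite !ltr_pM2r //; apply/andP; split; lra.
Qed.

Lemma dominated_by_log_power (s : nat) (C c K : R) : 0 < C -> 0 <= c ->
  exists X : R, forall x, X <= x ->
    c * x / ln x ^+ s.+1 + K < 2^-1 * (C * x / ln x ^+ s).
Proof.
move=> C0 c0; set F : R := (s.+1)`!%:R.
have F0 : 0 < F by rewrite ltr0n fact_gt0.
set T := Num.max 1 (Num.max (4 * c / C) (F * (4 * `|K| + 1) / C)).
exists (expR T : R) => x Tx.
have x0 : 0 < x by apply: lt_le_trans Tx; exact: expR_gt0.
have {Tx} : T <= ln x by rewrite -ler_expR lnK ?posrE.
rewrite !ge_max => /and3P[t1 tc tK]; set t := ln x in t1 tc tK *.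
have t0 : 0 < t by lra.
set E := x / t ^+ s.
have E_ge : t / F <= E.
  have := expR_ge1Dxn s (ltW t0); rewrite /t lnK ?posrE // -/t => xge.
  by rewrite /E ler_pdivlMr ?exprn_gt0 // mulrAC -exprS; lra.
have ct : c / t <= C / 4.
  rewrite ler_pdivrMr // in tc; rewrite ler_pdivrMr // mulrAC ler_pdivlMr //.
  by rewrite mulrC [C * t]mulrC.
have KE : K < C / 4 * (t / F).
  rewrite ler_pdivrMr // in tK.
  have -> : C / 4 * (t / F) = t * C / (4 * F) by field; rewrite gt_eqF.
  rewrite ltr_pdivlMr ?mulr_gt0 //.
  have : K * (4 * F) <= `|K| * (4 * F).
    by rewrite ler_wpM2r ?ler_norm // mulr_ge0 // ltW.
  lra.
have tn0 : t != 0 by rewrite gt_eqF.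
have e1 : c * x / t ^+ s.+1 = c / t * E by rewrite /E exprS; field; rewrite expf_neq0.
have e2 : C * x / t ^+ s = C * E by rewrite /E mulrA.
have E0 : 0 <= E by apply: le_trans E_ge; rewrite divr_ge0 // ltW.
have := ler_wpM2r E0 ct; have := ler_wpM2l (ltW (divr_gt0 C0 (ltr0n R 4))) E_ge.
rewrite e1 e2; lra.
Qed.

Definition all_prime_at (fs : seq {poly int}) (m : nat) : bool :=
  all (fun f : {poly int} => primez f.[m%:Z]) fs.

Definition bh_admissible (fs : seq {poly int}) : Prop :=
  [/\ uniq fs, forall f, f \in fs -> irreducible_Zx f,
      forall f, f \in fs -> 0 < lead_coef f & bunyakovsky fs].

Definition diverging (f : {poly int}) : Prop :=
  forall B : int, exists M : nat, forall m : nat, (M <= m)%N -> B < f.[m%:Z].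

Definition admissible_extra (fs : seq {poly int}) (g : {poly int}) : Prop :=
  [/\ g \notin fs, 0 < lead_coef g,
      bunyakovsky (rcons fs g) -> irreducible_Zx g & diverging g].

Definition thin (s : nat) (P : pred nat) : Prop :=
  exists c K X : R, 0 <= c /\ forall x, X <= x ->
    (count P (iota 1 (Num.truncn x)))%:R <= c * x / ln x ^+ s.+1 + K.

Lemma count_iota_lt (P : pred nat) M a n :
  {in iota a n, forall m, P m -> (m < M)%N} -> (count P (iota a n) <= M)%N.
Proof.
move=> PM; rewrite -size_filter.
rewrite -(size_iota 0 M) uniq_leq_size ?filter_uniq ?iota_uniq // => m.
by rewrite mem_filter => /andP[Pm /PM/(_ Pm) mM]; rewrite mem_iota.
Qed.

Lemma exists_ge_of_count (P : pred nat) M a n :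
  (M < count P (iota a n))%N -> exists2 m, (M <= m)%N & P m.
Proof.
have [/hasP[m _ /andP[]]|] := boolP (has (fun m => (M <= m)%N && P m) (iota a n)).
  by exists m.
rewrite -all_predC => /allP noP; rewrite ltnNge count_iota_lt // => m /noP.
by rewrite /= negb_and -ltnNge => /orP[//|/negP nPm /nPm].
Qed.

Lemma count_predI_predC (T : Type) (a b : pred T) s :
  count a s = (count (predI a b) s + count (predI a (predC b)) s)%N.
Proof. by elim: s => //= x s ->; case: (a x) (b x) => -[]; lia. Qed.

Lemma thin_bounded s (P : pred nat) M : (forall m, P m -> m < M)%N -> thin s P.
Proof.
move=> PM; exists 0, M%:R, 0; split=> // x _.
by rewrite !mul0r add0r ler_nat count_iota_lt // => m _ /PM.
Qed.

Lemma thin_sub s (P P' : pred nat) : subpred P P' -> thin s P' -> thin s P.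
Proof.
move=> PP' [c [K [X [c0 hc]]]]; exists c, K, X; split=> // x Xx.
by apply: le_trans (hc x Xx); rewrite ler_nat sub_count.
Qed.

Lemma thin_predU s (P P' : pred nat) : thin s P -> thin s P' -> thin s (predU P P').
Proof.
move=> [c [K [X [c0 hc]]]] [c' [K' [X' [c0' hc']]]].
exists (c + c'), (K + K'), (Num.max X X'); split=> [|x]; first exact: addr_ge0.
rewrite ge_max => /andP[/hc Px /hc' P'x].
have -> : (c + c') * x / ln x ^+ s.+1 + (K + K') =
    c * x / ln x ^+ s.+1 + K + (c' * x / ln x ^+ s.+1 + K') by ring.
apply: le_trans (lerD Px P'x).
by rewrite -natrD ler_nat -count_predUI leq_addr.
Qed.

Lemma bh_count_bounds fs : BatemanHorn -> bh_admissible fs ->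
  exists C X : R, 0 < C /\ forall x, X <= x ->
    2^-1 * (C * x / ln x ^+ size fs) < (bh_count fs x)%:R < 3 / 2 * (C * x / ln x ^+ size fs).
Proof.
move=> BH [u irr lc bu]; have [C [C0 hC]] := BH fs u irr lc bu.
have [X hX] := hC 2^-1 (ltac:(by rewrite invr_gt0 ltr0n)).
exists C, (Num.max X 2); split=> // x; rewrite ge_max => /andP[/hX near1 x2].
apply: ratio_near1 near1; rewrite divr_gt0 ?exprn_gt0 ?ln_gt0 ?mulr_gt0 //; lra.
Qed.

Lemma diverging_all (fs : seq {poly int}) : (forall f, f \in fs -> diverging f) ->
  forall B : int, exists M : nat, forall m : nat, (M <= m)%N ->
    forall f, f \in fs -> B < f.[m%:Z].
Proof.
elim: fs => [_ B|f fs IH div_ffs B]; first by exists 0%N.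
have [M1 h1] := div_ffs f (mem_head _ _) B.
have [|M2 h2] := IH _ B; first by move=> g gfs; apply: div_ffs; rewrite in_cons gfs orbT.
exists (maxn M1 M2) => m; rewrite geq_max => /andP[/h1 fm /h2 fsm] g.
by rewrite in_cons => /orP[/eqP ->|/fsm].
Qed.

Lemma primez_dvd (p : nat) (z : int) : prime p -> primez z -> (p%:Z %| z)%Z -> z = p.
Proof.
move=> pp /andP[z0 pz]; rewrite dvdzE /= dvdn_prime2 // => /eqP pE.
by rewrite -[z]gez0_abs -?pE // ltW.
Qed.

Section ExtraPrimeValues.

Variable fs : seq {poly int}.
Hypothesis BH : BatemanHorn.
Hypothesis fs_adm : bh_admissible fs.
Hypothesis fs_div : forall f, f \in fs -> diverging f.

Lemma thin_extra g : admissible_extra fs g ->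
  thin (size fs) (fun m => all_prime_at fs m && primez g.[m%:Z]).
Proof.
(* Either [rcons fs g] is admissible, and Bateman-Horn itself gives the bound,
   or its product has a fixed prime divisor [p], and then no [m] for which all
   values exceed [p] makes them all prime. *)
case: fs_adm => fs_uniq fs_irr fs_lc _ [g_fs g_lc g_irr g_div].
have all_prime_rcons m :
    all_prime_at (rcons fs g) m = all_prime_at fs m && primez g.[m%:Z].
  by rewrite /all_prime_at all_rcons andbC.
have mem_rcons_fsg f : f \in rcons fs g -> f = g \/ f \in fs.
  by rewrite mem_rcons in_cons => /orP[/eqP|]; [left|right].
have [[p [pp hp]]|noFD] := pselect (fixed_prime_divisor (\prod_(f <- rcons fs g) f)).
  have [|M hM] := @diverging_all (rcons fs g) _ p%:Z.
    by move=> f /mem_rcons_fsg[->|/fs_div].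
  apply: (thin_bounded _ (M := M)) => m; rewrite -all_prime_rcons => fsg_pr.
  rewrite ltnNge; apply/negP => /hM gt_p.
  have [f f_in pf] := prime_dvdz_prod pp (fixed_divisor_everywhere pp hp m).
  have := gt_p f f_in; rewrite (primez_dvd pp _ pf) ?ltxx //.
  exact: (allP fsg_pr).
have fsg_adm : bh_admissible (rcons fs g).
  have bu : bunyakovsky (rcons fs g) by apply/bunyakovskyE.
  split=> [|f /mem_rcons_fsg[->|/fs_irr]|f /mem_rcons_fsg[->|/fs_lc]|] //.
    by rewrite rcons_uniq g_fs.
  exact: g_irr.
have [C [X [C0 hC]]] := bh_count_bounds BH fsg_adm.
exists (3 / 2 * C), 0, X; split=> [|x /hC /andP[_ /ltW]]; first lra.
by rewrite /bh_count (eq_count all_prime_rcons) size_rcons addr0 !mulrA.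
Qed.

Lemma thin_has gs : (forall g, g \in gs -> admissible_extra fs g) ->
  thin (size fs) (fun m => all_prime_at fs m && has (fun g => primez g.[m%:Z]) gs).
Proof.
elim: gs => [_|g gs IH gs_adm].
  by apply: (thin_bounded _ (M := 0)) => m; rewrite andbF.
apply: (thin_sub (P' := predU (fun m => all_prime_at fs m && primez g.[m%:Z])
                             (fun m => all_prime_at fs m && has (fun g => primez g.[m%:Z]) gs))).
  by move=> m /= /andP[-> /orP[]->]; rewrite ?orbT.
apply: thin_predU; first exact/thin_extra/gs_adm/mem_head.
by apply: IH => h hgs; apply: gs_adm; rewrite in_cons hgs orbT.
Qed.

Lemma exists_prime_values_avoiding gs :
  (forall g, g \in gs -> admissible_extra fs g) -> forall M : nat,
  exists m, [/\ (M <= m)%N, all_prime_at fs m & all (fun g => ~~ primez g.[m%:Z]) gs].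
Proof.
move=> gs_adm M; set bad := fun m => has (fun g => primez g.[m%:Z]) gs.
have [c [K [X1 [c0 thin_bad]]]] := thin_has gs_adm.
have [C [X2 [C0 bh_bounds]]] := bh_count_bounds BH fs_adm.
have [X3 dominated] := dominated_by_log_power (size fs) (K + M%:R) C0 c0.
set x := Num.max X1 (Num.max X2 X3); set s := iota 1 (Num.truncn x).
have /thin_bad : X1 <= x by rewrite !le_max lexx.
have /bh_bounds/andP[+ _] : X2 <= x by rewrite !le_max lexx orbT.
have /dominated : X3 <= x by rewrite !le_max lexx !orbT.
rewrite -/s => dom_x lower_x bad_x.
have : (count (predI (all_prime_at fs) bad) s + M < count (all_prime_at fs) s)%N.
  by rewrite -(ltr_nat R) natrD; lra.
rewrite [X in (_ < X)%N](count_predI_predC _ bad) ltn_add2l.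
case/exists_ge_of_count=> m Mm /andP[fs_m /= bad_m].
by exists m; split; rewrite // all_predC.
Qed.

End ExtraPrimeValues.

Lemma diverging_quad (u : nat) (v : int) : (0 < u)%N -> diverging (quad u v).
Proof.
move=> u0 B; exists (`|v| + `|B| + 1)%N => m mge; rewrite horner_quad.
have um : m%:Z <= u%:Z * m%:Z by rewrite ler_peMl // ?ler1n // ler0n.
have : `|B|%:Z + 1 <= u%:Z * m%:Z - v.
  have : v <= `|v|%:Z by rewrite abszE ler_norm.
  move: mge; rewrite -(ler_nat int) !natrD; lia.
have : B <= `|B|%:Z by rewrite abszE ler_norm.
set z := _ - v => Bb zB; have : z <= z ^+ 2 by rewrite expr2 ler_peMl //; lia.
lia.
Qed.

Section Quads.

Variables (Q : nat) (ts : seq nat).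
Hypothesis Q_gt0 : (0 < Q)%N.

Let Q_neq0 : Q%:Z != 0. Proof. by rewrite eqz_nat -lt0n. Qed.

Lemma quads_admissible : uniq ts -> all (dvdn Q) ts ->
  (forall p, prime p -> (p <= 2 * size ts)%N -> (p %| Q)%N) ->
  bh_admissible (quads Q ts).
Proof.
move=> ts_uniq Qts hQ; have bu := bunyakovsky_quads Q_gt0 Qts hQ.
split=> //.
- by rewrite map_inj_uniq // => v w /quad_inj.
- move=> f fq; have [t _ fE] := mapP fq; rewrite fE.
  apply: quad_irreducible => // FD; move/bunyakovskyE: bu; apply.
  by apply: fixed_prime_divisor_prod fq _; rewrite fE.
- by move=> f /mapP[t _ ->]; rewrite lead_coef_quad // exprn_gt0 // ltz_nat.
Qed.

Lemma quad_admissible_extra t : t \notin ts -> admissible_extra (quads Q ts) (quad Q t).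
Proof.
move=> t_ts; split.
- by apply: contra t_ts => /mapP[w wts /quad_inj ->].
- by rewrite lead_coef_quad // exprn_gt0 // ltz_nat.
- move=> /bunyakovskyE bu; apply: quad_irreducible => // FD; apply: bu.
  by apply: fixed_prime_divisor_prod FD; rewrite mem_rcons mem_head.
- exact: diverging_quad.
Qed.

Lemma inA_quad m t : (t < Q * m)%N -> inA (Q * m - t) = primez (quad Q t).[m%:Z].
Proof.
move=> tQm; have tle : (t <= Q * m)%N by apply: ltnW.
rewrite horner_quad -PoszM (subzn tle) expr2 -PoszM -PoszD.
by rewrite /inA /primez subn_gt0 tQm mulnn addn1.
Qed.

Lemma quads_diverging f : f \in quads Q ts -> diverging f.
Proof. by case/mapP=> t _ ->; apply: diverging_quad. Qed.

Lemma inA_of_all_prime_at m t : all_prime_at (quads Q ts) m -> t \in ts ->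
  (t < Q * m)%N -> inA (Q * m - t).
Proof. by move=> /allP fs_m tts tQm; rewrite inA_quad //; apply/fs_m/map_f. Qed.

End Quads.

(** * Ranks in [A] and the index [j] *)

Lemma notA_twice_sq z : (2 <= z)%N -> ~~ inA (2 * z ^ 2).
Proof.
move=> z2; rewrite /inA negb_and; apply/orP; right; apply/primePn; right.
have -> : ((2 * z ^ 2) ^ 2 + 1 = (2 * z * (z - 1) + 1) * (2 * z * (z + 1) + 1))%N.
  by case: z z2 => [|w] // _; rewrite subn1 /=; ring.
exists (2 * z * (z - 1) + 1)%N; last exact: dvdn_mulr.
by apply/andP; split; nia.
Qed.

Definition rankA (a : nat) : nat := count inA (iota 0 a).

Lemma rankA_split x y : (x <= y)%N ->
  rankA y = (rankA x + count inA (iota x (y - x)))%N.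
Proof. by move=> xy; rewrite /rankA -count_cat -iotaD subnKC. Qed.

Lemma rankA_mono x y : (x <= y)%N -> (rankA x <= rankA y)%N.
Proof. by move=> xy; rewrite (rankA_split xy) leq_addr. Qed.

Lemma rankA_lt x y : inA x -> (x < y)%N -> (rankA x < rankA y)%N.
Proof.
by move=> Ax xy; rewrite (rankA_split (ltnW xy)) -subnSK //= Ax; lia.
Qed.

Lemma rankA_next x y : inA x -> (x < y)%N ->
  (forall z, (x < z < y)%N -> ~~ inA z) -> rankA y = (rankA x).+1.
Proof.
move=> Ax xy gap; rewrite (rankA_split (ltnW xy)) -subnSK //= Ax.
rewrite (@eq_in_count _ _ pred0) ?count_pred0 ?addn1 // => z.
by rewrite mem_iota subnKC // => /andP[xz zy]; apply/negbTE/gap/andP.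
Qed.

Lemma nthA_rank b : inA b -> nthA (rankA b).+1 b.
Proof. by []. Qed.

Lemma nthA_inj r b b' : nthA r b -> nthA r b' -> b = b'.
Proof.
move=> [_ [Ab rb]] [_ [Ab' rb']].
by have [/(rankA_lt Ab)|/(rankA_lt Ab')|] := ltngtP b b'; rewrite /rankA ?rb ?rb' ?ltnn.
Qed.

Lemma jA_of_witness n a k i0 b0 : nthA n a -> (1 <= i0 <= n.-1)%N ->
  nthA (n - i0) b0 -> inA (a - b0) ->
  (forall i b, (1 <= i < k)%N -> nthA (n - i) b -> ~~ inA (a - b)) ->
  exists j, jA n j /\ (k <= j)%N.
Proof.
move=> na i0n nb0 Ab0 below_k.
pose P i := `[< (1 <= i <= n.-1)%N /\ exists b, nthA (n - i) b /\ inA (a - b) >].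
have exP : exists i, P i by exists i0; apply/asboolP; split=> //; exists b0.
case: (ex_minnP exP) => j /asboolP[jn [b [nb Ab]]] j_min.
exists j; split; last first.
  rewrite leqNgt; apply/negP => jk; have jk' : (1 <= j < k)%N by lia.
  by have /negP := below_k j b jk' nb.
split; first lia.
exists a; split=> //; split=> //; split; first by exists b.
move=> i /andP[i1 ij] b' nb'; apply/negP => Ab'.
suff : (j <= i)%N by lia.
by apply: j_min; apply/asboolP; split; [lia | exists b'].
Qed.

Section Window.

Variables (a k : nat) (d : nat -> nat).
Hypothesis k_gt0 : (0 < k)%N.
Hypothesis d_incr : {homo d : m n / (m < n)%N}.
Hypothesis d0 : d 0%N = 0%N.
Hypothesis window_in : forall y, (y < k)%N -> inA (a - d y).
Hypothesis window_gap :
  forall t, (t < d k.-1)%N -> (forall y, t != d y) -> ~~ inA (a - t).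

Let d_lt : {mono d : m n / (m < n)%N}. Proof. exact/leqW_mono/leq_mono. Qed.

Let d_lt_a y : (y < k)%N -> (d y < a)%N.
Proof. by move/window_in/andP=> []; rewrite subn_gt0. Qed.

Lemma rankA_window y : (y < k)%N -> (rankA (a - d y) + y)%N = rankA a.
Proof.
elim: y => [_|y IH yk]; first by rewrite d0 subn0 addn0.
rewrite -(IH (ltnW yk)) addnS -addSn; congr (_ + _)%N; apply/esym/rankA_next.
- exact: window_in.
- by have := d_lt_a yk; have := d_incr (ltnSn y); lia.
move=> z /andP[lo hi]; have za : (z <= a)%N by lia.
rewrite -(subKn za); apply: window_gap.
  have : (d y.+1 <= d k.-1)%N by rewrite (leq_mono d_incr); lia.
  by have := d_lt_a yk; lia.
move=> y'; apply/eqP => E.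
have : (d y < d y')%N by rewrite -E; have := d_lt_a (ltnW yk); lia.
have : (d y' < d y.+1)%N by rewrite -E; lia.
by rewrite !d_lt; lia.
Qed.

Lemma nthA_window y : (y < k)%N -> nthA ((rankA a).+1 - y) (a - d y).
Proof.
move=> yk; have := rankA_window yk; rewrite /rankA => rk.
by split; [lia | split; [exact: window_in | lia]].
Qed.

Hypothesis d_notA : forall y, (0 < y)%N -> ~~ inA (d y).

Lemma jA_window b : inA b -> inA (a - b) -> exists j, jA (rankA a).+1 j /\ (k <= j)%N.
Proof.
move=> Ab Aab; have ba : (b < a)%N by move: Aab => /andP[]; rewrite subn_gt0.
have Aa : inA a by have := window_in k_gt0; rewrite d0 subn0.
have rb := rankA_lt Ab ba.
apply: (@jA_of_witness _ _ _ (rankA a - rankA b) b (nthA_rank Aa)) => //; first lia.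
  by have -> : ((rankA a).+1 - (rankA a - rankA b) = (rankA b).+1)%N by lia.
move=> i b' ik nb'; have ia : (d i < a)%N by apply: d_lt_a; lia.
rewrite (nthA_inj nb' (nthA_window (_ : i < k)%N)); last by lia.
by rewrite (subKn (ltnW ia)); apply: d_notA; lia.
Qed.

End Window.

(** * Constructing the window *)

Lemma exists_A_pattern Q ts L M : BatemanHorn -> (0 < Q)%N -> uniq ts ->
  all (dvdn Q) ts -> (forall p, prime p -> (p <= 2 * size ts)%N -> (p %| Q)%N) ->
  exists m, [/\ (M <= m)%N,
    forall t, t \in ts -> (t < Q * m)%N -> inA (Q * m - t) &
    forall t, (t < L)%N -> t \notin ts -> (t < Q * m)%N -> ~~ inA (Q * m - t)].
Proof.
move=> BH Q0 ts_uniq Q_ts Q_size.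
pose gs := [seq quad Q t%:Z | t <- iota 0 L & t \notin ts].
have gs_extra g : g \in gs -> admissible_extra (quads Q ts) g.
  by case/mapP=> t; rewrite mem_filter => /andP[t_ts _] ->; apply: quad_admissible_extra.
have [m [Mm fs_m gs_m]] := exists_prime_values_avoiding BH
  (quads_admissible Q0 ts_uniq Q_ts Q_size) (quads_diverging Q0) gs_extra M.
exists m; split=> // [t|t tL t_ts tQm]; first exact: inA_of_all_prime_at.
rewrite inA_quad //; apply: (allP gs_m); apply/mapP; exists t => //.
by rewrite mem_filter t_ts mem_iota.
Qed.

Lemma exists_A_multiple Q M : BatemanHorn -> (0 < Q)%N -> (2 %| Q)%N ->
  exists m, (M <= m)%N /\ inA (Q * m).
Proof.
move=> BH Q0 Q_even.
have Q_primes p : prime p -> (p <= 2 * size [:: 0%N])%N -> (p %| Q)%N.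
  by move=> pp p2; have -> : p = 2%N by have := prime_gt1 pp; move: p2 => /=; lia.
have [|m [Mm A_0 _]] := @exists_A_pattern Q [:: 0%N] 0 M.+1 BH Q0 isT _ Q_primes.
  by rewrite /= dvdn0.
exists m; split; first lia.
by rewrite -[(Q * m)%N]subn0 A_0 ?mem_head ?muln_gt0 ?Q0 //; lia.
Qed.

Lemma rankA_unbounded N : BatemanHorn -> exists Y, (N <= rankA Y)%N.
Proof.
move=> BH; elim: N => [|N [Y NY]]; first by exists 0%N.
have [m [Ym Am]] := exists_A_multiple Y BH (isT : 0 < 2)%N (dvdnn 2).
exists (2 * m).+1; apply: leq_ltn_trans (rankA_lt Am (ltnSn _)).
by apply: leq_trans NY (rankA_mono _); lia.
Qed.

(* Shifts of the form [2 z^2] are never in [A] (see [notA_twice_sq]). *)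
Definition window_shift (Q y : nat) : nat := 2 * (Q * y) ^ 2.

Lemma window_shift0 Q : window_shift Q 0 = 0%N.
Proof. by rewrite /window_shift muln0. Qed.

Lemma window_shift_incr Q : (0 < Q)%N -> {homo window_shift Q : m n / (m < n)%N}.
Proof. by move=> Q0 m n mn; rewrite /window_shift ltn_pmul2l // ltn_sqr ltn_pmul2l. Qed.

Lemma dvdn_window_shift Q y : (Q %| window_shift Q y)%N.
Proof. by rewrite /window_shift expnMn mulnCA dvdn_mulr // dvdn_mull // dvdn_exp. Qed.

Lemma window_shift_lt Q k y m : (0 < Q)%N -> (y < k)%N -> (2 * Q * k ^ 2 < m)%N ->
  (window_shift Q y < Q * m)%N.
Proof.
move=> Q0 yk km; apply: (@leq_ltn_trans (Q * (2 * Q * k ^ 2))); last first.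
  by rewrite ltn_pmul2l.
have : (Q * y * (Q * y) <= Q * Q * (k * k))%N.
  by rewrite mulnACA leq_mul2l (leq_mul (ltnW yk) (ltnW yk)) orbT.
rewrite /window_shift -!mulnn; lia.
Qed.

Lemma notA_window_shift Q y : (2 <= Q)%N -> (0 < y)%N -> ~~ inA (window_shift Q y).
Proof. by move=> Q2 y0; apply: notA_twice_sq; nia. Qed.

Lemma exists_A_window k Q M : BatemanHorn -> (0 < k)%N -> (0 < Q)%N ->
  (forall p, prime p -> (p <= 2 * k.+1)%N -> (p %| Q)%N) ->
  exists a b, [/\ (M <= a)%N, inA b, inA (a - b),
    forall y, (y < k)%N -> inA (a - window_shift Q y) &
    forall t, (t < window_shift Q k.-1)%N -> (forall y, t != window_shift Q y) ->
      ~~ inA (a - t)].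
Proof.
move=> BH k0 Q0 Q_primes; set d := window_shift Q.
(* The shift [Q * m0] only serves to make [j] defined: it provides [b]. *)
have [m0 [m0_big Am0]] : exists m0, (2 * Q * k ^ 2 < m0)%N /\ inA (Q * m0).
  by apply: exists_A_multiple => //; apply: Q_primes => //; lia.
pose ts := rcons [seq d y | y <- iota 0 k] (Q * m0).
have mem_ts t : t \in ts = (t == Q * m0) || has (fun y => t == d y) (iota 0 k).
  by rewrite mem_rcons in_cons; congr (_ || _); apply/mapP/hasP=> -[y ? /eqP]; exists y.
have ts_lt t : t \in ts -> (t <= Q * m0)%N.
  rewrite mem_ts => /orP[/eqP -> //|/hasP[y]]; rewrite mem_iota => /andP[_ yk] /eqP ->.
  exact/ltnW/(window_shift_lt Q0 yk m0_big).
have ts_uniq : uniq ts.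
  rewrite rcons_uniq map_inj_uniq ?iota_uniq ?andbT; last first.
    exact/incn_inj/leq_mono/window_shift_incr.
  apply/negP=> /mapP[y]; rewrite mem_iota => /andP[_ yk] E.
  by have := window_shift_lt Q0 yk m0_big; rewrite -/d -E ltnn.
have Q_ts : all (dvdn Q) ts.
  by rewrite all_rcons dvdn_mulr //=; apply/allP=> x /mapP[y _ ->]; apply: dvdn_window_shift.
have [|m [Mm A_ts A_gap]] := @exists_A_pattern Q ts (d k.-1) (M + m0.+1) BH Q0 ts_uniq Q_ts.
  by rewrite size_rcons size_map size_iota.
have m0m : (Q * m0 < Q * m)%N by rewrite ltn_pmul2l //; lia.
exists (Q * m)%N, (Q * m - Q * m0)%N; split.
- by apply: leq_trans (leq_pmull _ Q0); lia.
- by apply: A_ts m0m; rewrite mem_ts eqxx.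
- by rewrite subKn // ltnW.
- move=> y yk; have y_ts : d y \in ts.
    by rewrite mem_ts; apply/orP; right; apply/hasP; exists y; rewrite ?mem_iota.
  exact: A_ts y_ts (leq_ltn_trans (ts_lt _ y_ts) m0m).
move=> t t_lt t_d; have dk : (d k.-1 < Q * m0)%N by apply: window_shift_lt Q0 _ m0_big; lia.
apply: A_gap; [done | | exact: ltn_trans t_lt (ltn_trans dk m0m)].
rewrite mem_ts negb_or -all_predC; apply/andP; split; last by apply/allP=> y _ /=.
by apply: contraTneq t_lt => ->; rewrite -leqNgt ltnW.
Qed.

Theorem proposition2 :
  BatemanHorn ->
  forall k : nat, (0 < k)%N ->
  forall N : nat, exists n j : nat, (N <= n)%N /\ jA n j /\ (k <= j)%N.
Proof.
move=> BH k k0 N; have [Y NY] := rankA_unbounded N BH.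
pose Q := (2 * k.+1)`!.
have Q_primes p : prime p -> (p <= 2 * k.+1)%N -> (p %| Q)%N.
  by move=> /prime_gt0 p0 pk; apply: dvdn_fact; rewrite p0.
have Q2 : (2 <= Q)%N by apply: dvdn_leq (fact_gt0 _) (Q_primes 2%N isT _); lia.
have [a [b [Ya Ab Aab A_in A_gap]]] := exists_A_window Y BH k0 (fact_gt0 _) Q_primes.
have [j [jA_j kj]] := jA_window k0 (window_shift_incr (fact_gt0 _)) (window_shift0 _)
  A_in A_gap (fun y => @notA_window_shift _ y Q2) Ab Aab.
exists (rankA a).+1, j; split=> //.
by apply: leq_trans NY (leq_trans (rankA_mono Ya) (leqnSn _)).
Qed.
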